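(* Let $T$ be a key with at most $n$ rows. Then $$\sum_{Q}\beta^{|\mathrm{wt}(Q)|-|\mathrm{wt}(T)|}x^{\mathrm{wt}(Q)}=\mathfrak{L}^{(\beta)}_{\mathrm{wt}(\mathrm{cap}_n(T))},$$ where the sum is over reverse set-valued tableaux $Q$ of the same shape as $T$ with $K_-(L(Q))\le T$ entrywise and $\max(Q)\le n$.
   Context: Tableaux are in English convention; $T_c$ is the set of entries of column $c$; $|\mathrm{wt}(T)|$ denotes the number of cells of $T$. A key is a tableau with strictly increasing columns and $T_1\supseteq T_2\supseteq\cdots$. For a key $T$ with at most $n$ rows, $\mathrm{cap}_n(T)$ replaces, in each column, entries larger than $n$ by the largest integers in $[n]$ missing from that column, then sorts each column increasingly. For a tableau with entries in $[n]$, $\mathrm{wt}$ is the weak composition counting occurrences of each $i\in[n]$. A reverse set-valued tableau (RSVT) is a filling of a Young diagram with nonempty finite subsets of $\mathbb{Z}_{>0}$ such that $\min Q(r,c)\ge\max Q(r,c+1)$ and $\min Q(r,c)>\max Q(r+1,c)$; $\max(Q)$ is its largest entry; $\mathrm{wt}(Q)_i$ is the number of cells containing $i$; $L(Q)$ keeps the largest element of each cell. For finite $S,T$, $T\trianglerighteq S$ is obtained by going through $S$ from smallest to largest, each $s$ picking the smallest not-yet-picked $t\in T$ with $t\ge s$, and taking the picked set; $K_-(L(Q))$ is the tableau of the same shape whose column $i$ is $L(Q)_1\trianglerighteq(L(Q)_2\trianglerighteq(\cdots\trianglerighteq L(Q)_i))$ sorted increasingly. For a weak composition $\alpha$ with $n$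 parts, $\mathrm{key}(\alpha)$ is the key whose column $c$ is $\{i:\alpha_i\ge c\}$, $|\alpha|=\sum\alpha_i$, and the Lascoux polynomial is $\mathfrak{L}^{(\beta)}_\alpha=\sum_{Q}\beta^{|\mathrm{wt}(Q)|-|\alpha|}x^{\mathrm{wt}(Q)}$ over RSVTs $Q$ with entries subsets of $[n]$, of the same shape as $\mathrm{key}(\alpha)$, with $K_-(L(Q))\le\mathrm{key}(\alpha)$ entrywise. *)

From HB Require Import structures.
From mathcomp Require Import all_boot all_order all_algebra.
From mathcomp Require Import mpoly.
Set Implicit Arguments. Unset Strict Implicit. Unset Printing Implicit Defensive.
Import GRing.Theory.
Local Open Scope ring_scope.

(* A tableau is a [seq (seq nat)]: the list of its columns (column 1 first),*)
(* each column listed top to bottom (English convention).  Entries of keys  *)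
(* are positive integers.                                                   *)

Definition tableau := seq (seq nat).

Definition ncells (T : tableau) : nat := sumn (map size T).

Definition is_key (T : tableau) : bool :=
  all (fun col => [&& col != [::], sorted ltn col & all (fun x => 0 < x)%N col]) T
  && sorted (fun a b : seq nat => all (fun x => x \in a) b) T.

Definition nrows (T : tableau) : nat := size (nth [::] T 0).

(* cap_n on one column: entries > n are replaced by the largest integers in
   [n] missing from the column, then the column is sorted increasingly *)
Definition cap_col (n : nat) (C : seq nat) : seq nat :=
  let k := count (fun x => n < x)%N C in
  let keep := [seq x <- C | (x <= n)%N] in
  let missing := [seq j <- iota 1 n | j \notin C] in
  sort leq (keep ++ drop (size missing - k) missing).

Definition cap (n : nat) (T : tableau) : tableau := map (cap_col n) T.

Definition wt_tab (n : nat) (T : tableau) : seq nat :=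
  [seq sumn [seq count_mem i col | col <- T] | i <- iota 1 n].

Definition key (n : nat) (alpha : seq nat) : tableau :=
  [seq [seq i.+1 | i <- iota 0 n & (c <= nth 0 alpha i)%N]
     | c <- iota 1 (foldr maxn 0%N alpha)].

Fixpoint tri_aux (rest : seq nat) (S : seq nat) : seq nat :=
  match S with
  | [::] => [::]
  | s :: S' =>
      match [seq t <- rest | (s <= t)%N] with
      | [::] => tri_aux rest S'
      | t :: _ => t :: tri_aux (rem t rest) S'
      end
  end.
Definition tri (T S : seq nat) : seq nat := tri_aux (sort leq T) (sort leq S).

Fixpoint nest (cols : tableau) : seq nat :=
  match cols with
  | [::] => [::]
  | c :: cs => if cs is [::] then c else tri c (nest cs)
  end.

Definition Kminus (L : tableau) : tableau :=
  [seq sort leq (nest (take i L)) | i <- iota 1 (size L)].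

Definition tab_le (A B : tableau) : bool :=
  (size A == size B) &&
  all2 (fun a b => (size a == size b) && all2 leq a b) A B.

(* A filling is a finite function on the box 'I_n x 'I_(size T)            *)
(* (row r, column c, 0-indexed) with values in {set 'I_n}; the element     *)
(* i : 'I_n stands for the positive integer i+1 (so max(Q) <= n is built   *)
(* in).  Cells outside the shape of T carry the empty set.                  *)

Definition filling (n m : nat) := {ffun 'I_n * 'I_m -> {set 'I_n}}.

Definition in_shape (T : tableau) (r c : nat) : bool :=
  (r < size (nth [::] T c))%N.

Definition is_RSVT (n : nat) (T : tableau) (Q : filling n (size T)) : bool :=
  [forall r : 'I_n, forall c : 'I_(size T),
     (Q (r, c) != set0) == in_shape T r c]
  && [forall r : 'I_n, forall c : 'I_(size T), forall c' : 'I_(size T),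
       (val c' == (val c).+1) ==>
       [forall a in Q (r, c), forall b in Q (r, c'), (val b <= val a)%N]]
  && [forall r : 'I_n, forall r' : 'I_n, forall c : 'I_(size T),
       (val r' == (val r).+1) ==>
       [forall a in Q (r, c), forall b in Q (r', c), (val b < val a)%N]].

Definition cell (n m : nat) (Q : filling n m) (r c : nat) : {set 'I_n} :=
  match (insub r : option 'I_n), (insub c : option 'I_m) with
  | Some r', Some c' => Q (r', c')
  | _, _ => set0
  end.

Definition cell_max (n : nat) (S : {set 'I_n}) : nat :=
  (\max_(i in S) (val i).+1)%N.

Definition Lof (n : nat) (T : tableau) (Q : filling n (size T)) : tableau :=
  [seq [seq cell_max (cell Q r c) | r <- iota 0 (size (nth [::] T c))]
     | c <- iota 0 (size T)].

Definition wtQ (n m : nat) (Q : filling n m) (i : 'I_n) : nat :=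
  #|[set rc : 'I_n * 'I_m | i \in Q rc]|.

Definition totwt (n m : nat) (Q : filling n m) : nat :=
  (\sum_(i < n) wtQ Q i)%N.

Definition xmon (R : comRingType) (n m : nat) (Q : filling n m) : {mpoly R[n]} :=
  \prod_(i < n) 'X_i ^+ wtQ Q i.

Definition rsvt_sum (R : comRingType) (n : nat) (beta : R) (T : tableau)
    (d : nat) : {mpoly R[n]} :=
  \sum_(Q : filling n (size T) | is_RSVT Q && tab_le (Kminus (Lof Q)) T)
     (beta ^+ (totwt Q - d)) *: xmon R Q.

Definition lascoux (R : comRingType) (n : nat) (beta : R) (alpha : seq nat)
    : {mpoly R[n]} :=
  rsvt_sum n beta (key n alpha) (sumn alpha).

From mathcomp Require Import all_boot all_algebra mpoly.
From mathcomp Require Import zify.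
Set Implicit Arguments. Unset Strict Implicit.

(* The right-hand side is the same sum with T replaced by the key K := cap_n T:
   K has entries in [n] and the shape of T, and it is the key of its own weight.
   Both sides therefore run over the same reverse set-valued tableaux Q, and it
   remains to see that K_-(L(Q)) <= T iff K_-(L(Q)) <= K.  A column of K_-(L(Q))
   is a strictly increasing sequence of length m in [n], so its i-th entry is at
   most n - m + i, whereas the i-th entry of the capped column of T is
   min(T_i, n - m + i) (counting from 1). *)

Lemma count_ltn_geq (s : seq nat) v :
  count (fun x => x < v) s + count (fun x => v <= x) s = size s.
Proof.
rewrite -(count_predC (fun x => x < v)); congr (_ + _).
by apply: eq_count => x /=; rewrite leqNgt.
Qed.

Lemma ltn_nth_count (s : seq nat) i v : sorted ltn s -> i < size s ->
  (nth 0 s i < v) = (i < count (fun x => x < v) s).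
Proof.
elim: s i => [|a s IH] i //= s_sorted lt_i_s.
have a_lt_s := order_path_min ltn_trans s_sorted.
have count0 : ~~ (a < v) -> count (fun x => x < v) s = 0.
  move=> a_ge_v; apply/eqP; rewrite -leqn0 leqNgt -has_count; apply/hasPn => x xs.
  by rewrite -leqNgt (leq_trans _ (ltnW (allP a_lt_s x xs))) // leqNgt.
case: i lt_i_s => [|i] lt_i_s /=.
  by case: (ltnP a v) => a_v //=; rewrite count0 // -leqNgt.
case: (ltnP a v) => a_v /=; first by rewrite add1n ltnS IH // (path_sorted s_sorted).
rewrite count0 -?leqNgt //; apply/negbTE; rewrite -leqNgt.
by apply: leq_trans a_v (ltnW (allP a_lt_s _ (mem_nth 0 lt_i_s))).
Qed.

Lemma count_gtn_le (s : seq nat) n w : uniq s -> all (fun x => x <= n) s ->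
  count (fun x => w < x) s <= n - w.
Proof.
move=> s_uniq s_le_n; rewrite -size_filter -(size_iota w.+1 (n - w)).
apply: uniq_leq_size => [|x]; first exact: filter_uniq.
rewrite mem_filter mem_iota => /andP[w_x xs].
by rewrite w_x /=; have := allP s_le_n x xs; lia.
Qed.

Lemma count_geq_interval (s : seq nat) n w :
  {subset [pred z | w <= z <= n] <= s} -> n.+1 - w <= count (fun x => w <= x) s.
Proof.
move=> sub_s; rewrite -size_filter -(size_iota w (n.+1 - w)).
apply: uniq_leq_size => [|x]; first exact: iota_uniq.
rewrite mem_iota mem_filter => /andP[w_x x_lt]; rewrite w_x /=.
by apply: sub_s; rewrite inE w_x /=; lia.
Qed.

Lemma ltn_take_drop (s : seq nat) j x y : sorted ltn s ->
  x \in take j s -> y \in drop j s -> x < y.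
Proof.
rewrite (sorted_pairwise ltn_trans) -{1}(cat_take_drop j s) pairwise_cat.
by case/andP=> /allrelP take_drop _; apply: take_drop.
Qed.

Lemma mem_drop_count (s : seq nat) k y : sorted ltn s -> k <= size s ->
  (y \in drop (size s - k) s) = (y \in s) && (count (fun z => y < z) s < k).
Proof.
move=> s_sorted k_le; set j := size s - k.
have size_drop_j : size (drop j s) = k by rewrite size_drop /j; lia.
have count_cat_j : count (fun z => y < z) s =
    count (fun z => y < z) (take j s) + count (fun z => y < z) (drop j s).
  by rewrite -count_cat cat_take_drop.
rewrite -{2}(cat_take_drop j s) mem_cat.
case y_drop: (y \in drop j s).
  rewrite orbT count_cat_j.
  have -> : count (fun z => y < z) (take j s) = 0.
    apply/eqP; rewrite -leqn0 leqNgt -has_count; apply/hasPn => z z_take.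
    by rewrite -leqNgt ltnW // (ltn_take_drop s_sorted z_take y_drop).
  rewrite add0n -size_drop_j -(count_predC (fun z => y < z)) -addn1 leq_add2l.
  by symmetry; rewrite -has_count; apply/hasP; exists y => //=; rewrite ltnn.
rewrite orbF; case y_take: (y \in take j s) => //=.
symmetry; apply/negbTE; rewrite count_cat_j -leqNgt; apply: leq_trans (leq_addl _ _).
rewrite -size_drop_j -size_filter; apply/eq_leq; congr size; symmetry.
by apply/all_filterP/allP => z; apply: ltn_take_drop.
Qed.

Section CapColumn.

Variable n : nat.

Definition overflow (C : seq nat) := count (fun x => n < x) C.
Definition kept (C : seq nat) := [seq x <- C | x <= n].
Definition missing (C : seq nat) := [seq j <- iota 1 n | j \notin C].
Definition refill (C : seq nat) := drop (size (missing C) - overflow C) (missing C).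

Definition col_fits (C : seq nat) :=
  [&& sorted ltn C, all (fun x => 0 < x) C & size C <= n].

Lemma cap_colE C : cap_col n C = sort leq (kept C ++ refill C).
Proof. by []. Qed.

Lemma size_kept C : size (kept C) + overflow C = size C.
Proof.
rewrite /kept /overflow size_filter -(count_predC (fun x => x <= n) C).
by congr (_ + _); apply: eq_count => x /=; rewrite ltnNge.
Qed.

Lemma missing_sorted C : sorted ltn (missing C).
Proof. by apply: sorted_filter; [exact: ltn_trans | exact: iota_ltn_sorted]. Qed.

Variable C : seq nat.
Hypothesis C_fits : col_fits C.

Lemma col_fits_uniq : uniq C.
Proof. by case/and3P: C_fits; rewrite ltn_sorted_uniq_leq => /andP[]. Qed.

Lemma size_missing : size (missing C) = n - size (kept C).
Proof.
case/and3P: C_fits => _ C_pos _.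
have count_mem_C : count (fun j => j \in C) (iota 1 n) = size (kept C).
  rewrite -size_filter; apply/perm_size/uniq_perm.
  - exact: filter_uniq (iota_uniq _ _).
  - exact: filter_uniq col_fits_uniq.
  move=> x; rewrite !mem_filter mem_iota andbC; case x_C: (x \in C); rewrite ?andbF //=.
  by have := allP C_pos x x_C; lia.
rewrite /missing size_filter -[n in RHS](size_iota 1).
by rewrite -(count_predC (fun j => j \in C)) count_mem_C addKn.
Qed.

Lemma overflow_le_missing : overflow C <= size (missing C).
Proof.
rewrite size_missing; have := size_kept C.
by case/and3P: C_fits => _ _ size_C; lia.
Qed.

Lemma size_refill : size (refill C) = overflow C.
Proof. by rewrite /refill size_drop; have := overflow_le_missing; lia. Qed.

Lemma mem_refill y : (y \in refill C) =
  (y \in missing C) && (count (fun z => y < z) (missing C) < overflow C).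
Proof. exact: mem_drop_count (missing_sorted C) overflow_le_missing. Qed.

Lemma refill_up y z : y \in refill C -> z \in missing C -> y <= z -> z \in refill C.
Proof.
rewrite !mem_refill => /andP[_ count_y] z_miss y_z; rewrite z_miss /=.
by apply: leq_ltn_trans count_y; apply: sub_count => x /=; lia.
Qed.

Lemma mem_cap_col x : (x \in cap_col n C) = (x \in C) && (x <= n) || (x \in refill C).
Proof. by rewrite cap_colE mem_sort mem_cat mem_filter andbC. Qed.

Lemma size_cap_col : size (cap_col n C) = size C.
Proof. by rewrite cap_colE size_sort size_cat size_refill size_kept. Qed.

Lemma cap_col_range : all (fun x => 0 < x <= n) (cap_col n C).
Proof.
case/and3P: C_fits => _ C_pos _; apply/allP => x.
rewrite mem_cap_col => /orP[/andP[x_C ->]|/mem_drop]; first by rewrite (allP C_pos x x_C).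
by rewrite /missing mem_filter mem_iota => /andP[_]; lia.
Qed.

Lemma cap_col_sorted : sorted ltn (cap_col n C).
Proof.
rewrite ltn_sorted_uniq_leq cap_colE sort_sorted ?andbT; last exact: leq_total.
rewrite sort_uniq cat_uniq filter_uniq ?col_fits_uniq //=.
rewrite /refill drop_uniq ?filter_uniq ?iota_uniq // andbT.
apply/hasPn => y /mem_drop; rewrite /missing !mem_filter => /andP[y_C _].
by rewrite negb_and y_C orbT.
Qed.

Lemma count_cap_col (P : pred nat) :
  count P (cap_col n C) = count P (kept C) + count P (refill C).
Proof. by rewrite cap_colE -count_cat; apply/permP; rewrite perm_sort. Qed.

End CapColumn.

Section NthCapColumn.

Variables (n : nat) (C : seq nat) (i : nat).
Hypotheses (C_fits : col_fits n C) (lt_i_C : i < size C).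

Let w := minn (nth 0 C i) (n - size C + i.+1).

Let D_sorted : sorted ltn (cap_col n C) := cap_col_sorted C_fits.
Let lt_i_D : i < size (cap_col n C).
Proof. by rewrite size_cap_col. Qed.

Lemma nth_cap_col_le : nth 0 (cap_col n C) i <= w.
Proof.
case/and3P: C_fits => C_sorted _ size_C.
rewrite -ltnS (ltn_nth_count _ D_sorted lt_i_D).
case: (leqP (nth 0 C i) (n - size C + i.+1)) => C_i_small.
  rewrite /w (minn_idPl C_i_small) count_cap_col /kept count_filter.
  apply: leq_trans (leq_addr _ _).
  have := ltn_nth_count (nth 0 C i).+1 C_sorted lt_i_C; rewrite ltnSn => /esym lt_i_count.
  by apply: leq_trans lt_i_count _; apply: sub_count => x /= x_lt; rewrite x_lt /=; lia.
rewrite /w (minn_idPr (ltnW C_i_small)).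
have := count_ltn_geq (cap_col n C) (n - size C + i.+1).+1.
have D_uniq := sorted_uniq ltn_trans ltnn D_sorted.
have := @count_gtn_le (cap_col n C) n (n - size C + i.+1) D_uniq.
rewrite size_cap_col //; have /allP D_range := cap_col_range C_fits.
have D_le_n : all (fun x => x <= n) (cap_col n C) by apply/allP => x /D_range /andP[].
move=> /(_ D_le_n); lia.
Qed.

Lemma nth_cap_col_ge : w <= nth 0 (cap_col n C) i.
Proof.
case/and3P: C_fits => C_sorted _ size_C.
rewrite leqNgt (ltn_nth_count _ D_sorted lt_i_D) -leqNgt count_cap_col.
have kept_small : count (fun x => x < w) (kept n C) <= i.
  rewrite /kept count_filter.
  apply: leq_trans (_ : count (fun x => x < w) C <= i).
    by apply: sub_count => x /andP[].
  by rewrite leqNgt -(ltn_nth_count _ C_sorted lt_i_C) -leqNgt geq_minl.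
have [|] := boolP (has (fun x => x < w) (refill n C)); last first.
  by rewrite has_count -leqNgt leqn0 => /eqP ->; rewrite addn0.
case/hasP => y y_refill y_lt_w.
(* refill takes the largest missing values, so one below w brings all of [w, n] in. *)
have interval_D : {subset [pred z | w <= z <= n] <= cap_col n C}.
  move=> z /andP[w_z z_n]; rewrite mem_cap_col //.
  case z_C: (z \in C); first by rewrite z_n.
  rewrite (refill_up C_fits y_refill) ?orbT //; last by lia.
  by rewrite /missing mem_filter z_C mem_iota /=; lia.
have := count_geq_interval interval_D.
have := count_ltn_geq (cap_col n C) w; rewrite size_cap_col // -count_cap_col.
have : w <= n - size C + i.+1 by exact: geq_minr.
lia.
Qed.

End NthCapColumn.

Lemma nth_cap_col n C i : col_fits n C -> i < size C ->
  nth 0 (cap_col n C) i = minn (nth 0 C i) (n - size C + i.+1).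
Proof.
by move=> C_fits lt_i_C; apply/eqP; rewrite eqn_leq nth_cap_col_le ?nth_cap_col_ge.
Qed.

Lemma sorted_nth_le (K : seq nat) n i : sorted ltn K -> all (fun x => x <= n) K ->
  i < size K -> nth 0 K i <= n - size K + i.+1.
Proof.
move=> K_sorted K_le_n lt_i_K; set v := nth 0 K i.
have v_take : v \in take i.+1 K by rewrite /v -(nth_take 0 (ltnSn i)) mem_nth // size_takel.
have count_drop : count (fun z => v < z) (drop i.+1 K) = size K - i.+1.
  rewrite -size_drop; apply/eqP; rewrite -all_count; apply/allP => z.
  exact: ltn_take_drop K_sorted v_take.
have : size K - i.+1 <= count (fun z => v < z) K.
  by rewrite -{2}(cat_take_drop i.+1 K) count_cat count_drop leq_addl.
have := count_gtn_le v (sorted_uniq ltn_trans ltnn K_sorted) K_le_n.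
have : v <= n by apply: (allP K_le_n); rewrite mem_nth.
lia.
Qed.

Lemma all2_nth (S1 S2 : Type) (r : S1 -> S2 -> bool) x0 y0 s t : size s = size t ->
  all2 r s t = all (fun i => r (nth x0 s i) (nth y0 t i)) (iota 0 (size s)).
Proof.
elim: s t => [|a s IH] [|b t] //= [size_st]; congr (_ && _).
by rewrite IH // -(addn0 1) iotaDl all_map.
Qed.

Definition col_le (a b : seq nat) := (size a == size b) && all2 leq a b.

Lemma col_le_cap_col n K C : col_fits n C ->
  sorted ltn K -> all (fun x => x <= n) K -> col_le K (cap_col n C) = col_le K C.
Proof.
move=> C_fits K_sorted K_le_n; rewrite /col_le size_cap_col //.
case: eqP => //= size_KC.
rewrite !(all2_nth leq 0 0) ?size_cap_col //; apply: eq_in_all => i.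
rewrite mem_iota add0n => /andP[_ lt_i_K].
by rewrite nth_cap_col -?size_KC // leq_min (sorted_nth_le K_sorted K_le_n) ?andbT.
Qed.

Definition col_sup (a b : seq nat) := all (fun x => x \in a) b.

Lemma col_sup_trans : transitive col_sup.
Proof. by move=> b a c /allP ab /allP bc; apply/allP => x /bc /ab. Qed.

Lemma count_mem_nested (K : seq (seq nat)) x c : sorted col_sup K -> 0 < c ->
  (c <= count (fun col => x \in col) K) = (x \in nth [::] K c.-1).
Proof.
elim: K c => [|a K IH] c K_sorted c_pos /=; first by rewrite nth_nil in_nil leqNgt c_pos.
have a_sup_K := order_path_min col_sup_trans K_sorted.
case x_a: (x \in a).
  case: c c_pos => [|[|c]] _ //=.
  by rewrite add1n ltnS IH // (path_sorted K_sorted).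
have x_notin_K col : col \in K -> x \notin col.
  by move=> /(allP a_sup_K) /allP sup; apply/negP => /sup; rewrite x_a.
have -> : count (fun col => x \in col) K = 0.
  by apply/eqP; rewrite -leqn0 leqNgt -has_count; apply/hasPn => col /x_notin_K ->.
case: c c_pos => [|[|c]] // _ /=; case: (ltnP c (size K)) => [lt_c_K | ge_c_K].
  by rewrite (negbTE (x_notin_K _ (mem_nth [::] lt_c_K))).
by rewrite nth_default.
Qed.

Lemma sumn_count_mem (K : seq (seq nat)) x : all uniq K ->
  sumn [seq count_mem x col | col <- K] = count (fun col => x \in col) K.
Proof. by elim: K => [|a K IH] //= /andP[a_uniq K_uniq]; rewrite IH // count_uniq_mem. Qed.

Lemma foldr_maxn_eq (s : seq nat) N : all (fun x => x <= N) s -> N \in 0 :: s ->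
  foldr maxn 0 s = N.
Proof.
elim: s => [|a s IH] /=; first by rewrite mem_seq1 => _ /eqP.
case/andP=> a_le s_le; rewrite !in_cons => N_in; apply/eqP; rewrite eqn_leq geq_max a_le.
have -> /= : foldr maxn 0 s <= N.
  by elim: s s_le {IH N_in} => //= b s IHs /andP[b_le s_le]; rewrite geq_max b_le IHs.
case/or3P: N_in => [/eqP-> //|/eqP-> |N_s]; first exact: leq_maxl.
by rewrite leq_max IH ?leqnn ?orbT // in_cons N_s orbT.
Qed.

Lemma iota1_succ n : iota 1 n = map succn (iota 0 n).
Proof. exact: iotaDl 1 0 n. Qed.

Definition key_in n (K : seq (seq nat)) :=
  all (fun col => [&& sorted ltn col, all (fun x => 0 < x <= n) col & col != [::]]) K
  && sorted col_sup K.

Lemma col_of_members n (col : seq nat) : sorted ltn col -> all (fun x => 0 < x <= n) col ->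
  [seq i.+1 | i <- iota 0 n & i.+1 \in col] = col.
Proof.
move=> col_sorted col_range; apply: (irr_sorted_eq ltn_trans ltnn) => // [|x].
  rewrite sorted_map; apply: sorted_filter; last exact: iota_ltn_sorted.
  by move=> ? ? ?; apply: ltn_trans.
apply/mapP/idP => [[i] | x_col]; first by rewrite mem_filter => /andP[? _] ->.
have /andP[x_pos x_le_n] := allP col_range x x_col.
by exists x.-1; rewrite ?prednK // mem_filter prednK // x_col mem_iota; lia.
Qed.

Section KeyOfWeight.

Variables (n : nat) (K : seq (seq nat)).
Hypothesis K_key : key_in n K.

Let K_uniq : all uniq K.
Proof.
case/andP: K_key => /allP K_cols _; apply/allP => col /K_cols /and3P[col_sorted _ _].
exact: sorted_uniq ltn_trans ltnn _ col_sorted.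
Qed.

Lemma size_wt_tab : size (wt_tab n K) = n.
Proof. by rewrite size_map size_iota. Qed.

Lemma nth_wt_tab i : i < n -> nth 0 (wt_tab n K) i = count (fun col => i.+1 \in col) K.
Proof. by move=> lt_i_n; rewrite (nth_map 0) ?size_iota // nth_iota // sumn_count_mem. Qed.

Lemma foldr_maxn_wt_tab : foldr maxn 0 (wt_tab n K) = size K.
Proof.
case/andP: K_key => /allP K_cols K_sorted.
apply: foldr_maxn_eq.
  apply/allP => a /(nthP 0) [i]; rewrite size_wt_tab => lt_i_n <-.
  by rewrite nth_wt_tab // count_size.
case: (posnP (size K)) => [->|K_pos]; first exact: mem_head.
have lt_last_K : (size K).-1 < size K by rewrite ltn_predL.
have /and3P[_ last_range] := K_cols _ (mem_nth [::] lt_last_K).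
case last_K: (nth [::] K (size K).-1) last_range => [|x l] //.
case/andP=> /andP[x_pos x_le_n] _ _; have lt_x_n : x.-1 < n by rewrite prednK.
rewrite in_cons; apply/orP; right; apply/(nthP 0).
exists x.-1; first by rewrite size_wt_tab.
rewrite nth_wt_tab // prednK //.
apply/eqP; rewrite eqn_leq count_size /= -(prednK K_pos) count_mem_nested //.
by rewrite last_K mem_head.
Qed.

Lemma key_wt_tab : key n (wt_tab n K) = K.
Proof.
case/andP: K_key => /allP K_cols K_sorted.
rewrite /key foldr_maxn_wt_tab iota1_succ -map_comp.
rewrite -[RHS]take_size -(map_nth_iota0 [::]) //; apply/eq_in_map => c.
rewrite mem_iota add0n => /andP[_ lt_c_K] /=.
have /and3P[col_sorted col_range _] := K_cols _ (mem_nth [::] lt_c_K).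
rewrite -[RHS](col_of_members col_sorted col_range); congr map; apply: eq_in_filter => i.
by rewrite mem_iota add0n /= => lt_i_n; rewrite nth_wt_tab // (@count_mem_nested K _ c.+1).
Qed.

Lemma sumn_wt_tab : sumn (wt_tab n K) = ncells K.
Proof.
case/andP: K_key => /allP K_cols _.
rewrite /ncells sumnE big_map (eq_big_seq (fun i => \sum_(col <- K) (i \in col))).
  rewrite exchange_big sumnE big_map; apply: eq_big_seq => col.
  case/K_cols/and3P => col_sorted col_range _.
  rewrite -[in RHS](col_of_members col_sorted col_range) size_map size_filter.
  rewrite -sum1_count [RHS]big_mkcond iota1_succ big_map.
  by apply: eq_bigr => i _; case: (_ \in _).
move=> i _; rewrite sumn_count_mem // -sum1_count [LHS]big_mkcond.
by apply: eq_bigr => col _; case: (_ \in _).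
Qed.

End KeyOfWeight.

Lemma key_cols_fit n T : is_key T -> nrows T <= n -> all (col_fits n) T.
Proof.
case/andP=> /allP T_cols T_sorted T_rows; apply/allP => col col_T.
have /and3P[_ col_sorted col_pos] := T_cols col col_T.
rewrite /col_fits col_sorted col_pos (leq_trans _ T_rows) //.
case: T T_cols T_sorted T_rows col_T => [|a T] // _ T_sorted _.
rewrite in_cons /nrows /= => /predU1P [-> //|col_T].
apply: uniq_leq_size; first exact: sorted_uniq ltn_trans ltnn _ col_sorted.
exact/allP/(allP (order_path_min col_sup_trans T_sorted)).
Qed.

Lemma cap_col_sub n A B : col_fits n A -> col_fits n B -> {subset B <= A} ->
  {subset cap_col n B <= cap_col n A}.
Proof.
move=> A_fits B_fits BA x; rewrite !mem_cap_col // => /orP[/andP[x_B ->]|x_refill].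
  by rewrite BA.
have /mem_drop := x_refill; rewrite /missing mem_filter mem_iota => /andP[_ x_range].
case x_A: (x \in A); first by rewrite /=; lia.
have x_missing : x \in missing n A by rewrite mem_filter x_A mem_iota.
move: x_refill; rewrite /= !mem_refill // x_missing => /andP[_ lt_B].
have le_missing :
    count (fun z => x < z) (missing n A) <= count (fun z => x < z) (missing n B).
  rewrite !count_filter; apply: sub_count => j /= /andP[-> j_B].
  by apply: contra j_B => /BA.
have le_overflow : overflow n B <= overflow n A.
  rewrite /overflow -!size_filter; apply: uniq_leq_size => [|y].
    exact: filter_uniq (col_fits_uniq B_fits).
  by rewrite !mem_filter => /andP[-> /BA].
exact: leq_ltn_trans le_missing (leq_trans lt_B le_overflow).
Qed.

Lemma cap_key_in n T : is_key T -> nrows T <= n -> key_in n (cap n T).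
Proof.
move=> T_key T_rows; have /allP T_fit := key_cols_fit T_key T_rows.
case/andP: T_key => /allP T_cols T_sorted; apply/andP; split.
  apply/allP => _ /mapP [col col_T ->].
  rewrite cap_col_sorted ?cap_col_range ?T_fit //= -size_eq0 size_cap_col ?T_fit //.
  by rewrite size_eq0; case/and3P: (T_cols col col_T).
rewrite /cap sorted_map; apply: (sub_in_sorted _ (allss T) T_sorted) => a b a_T b_T ab.
apply/allP => x; apply: cap_col_sub (T_fit a a_T) (T_fit b b_T) _ x.
exact/allP.
Qed.

Lemma shape_cap n T : all (col_fits n) T -> map size (cap n T) = map size T.
Proof.
by move=> /allP T_fit; rewrite -map_comp; apply/eq_in_map => col /T_fit /size_cap_col.
Qed.

Lemma tri_aux_uniq_sub (rest S : seq nat) : uniq rest ->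
  uniq (tri_aux rest S) /\ {subset tri_aux rest S <= rest}.
Proof.
elim: S rest => [|s S IH] rest rest_uniq //=.
case picked: [seq t <- rest | s <= t] => [|t l]; first exact: IH.
have t_rest : t \in rest by have := mem_head t l; rewrite -picked mem_filter => /andP[].
have [IH_uniq IH_sub] := IH (rem t rest) (rem_uniq _ rest_uniq).
split=> [|x].
  by rewrite /= IH_uniq andbT; apply/negP => /IH_sub; rewrite mem_rem_uniqF.
by rewrite in_cons => /predU1P [-> //|/IH_sub /mem_rem].
Qed.

Lemma nest_uniq_sub (c : seq nat) cs : uniq c ->
  uniq (nest (c :: cs)) /\ {subset nest (c :: cs) <= c}.
Proof.
case: cs => [|c' cs] c_uniq /=; first by split.
rewrite /tri.
have sort_c_uniq : uniq (sort leq c) by rewrite sort_uniq.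
have [tri_uniq tri_sub] := tri_aux_uniq_sub (sort leq (nest (c' :: cs))) sort_c_uniq.
by split=> // x /tri_sub; rewrite mem_sort.
Qed.

Lemma Kminus_cols (L : tableau) : uniq (head [::] L) ->
  all (fun col => sorted ltn col && all (fun x => x \in head [::] L) col) (Kminus L).
Proof.
case: L => [|c L] // c_uniq; apply/allP => col /mapP [i].
rewrite mem_iota => /andP[i_pos _] ->; case: i i_pos => [|i] // _.
rewrite [take _ _]/= [head _ _]/=.
have [nest_uniq nest_sub] := nest_uniq_sub (take i L) c_uniq.
rewrite ltn_sorted_uniq_leq sort_uniq nest_uniq sort_sorted /=; last exact: leq_total.
by apply/allP => x; rewrite mem_sort => /nest_sub.
Qed.

Lemma tab_le_cap n K T :
  all (fun col => sorted ltn col && all (fun x => x <= n) col) K ->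
  all (col_fits n) T -> tab_le K (cap n T) = tab_le K T.
Proof.
rewrite /tab_le size_map; case: eqP => //= _.
elim: K T => [|a K IH] [|C T] //= /andP[/andP[a_sorted a_le_n] K_ok] /andP[C_fits T_fit].
by rewrite -/(col_le a (cap_col n C)) -/(col_le a C) col_le_cap_col // IH.
Qed.

Lemma cell_max_le n (S : {set 'I_n}) : cell_max S <= n.
Proof. by apply/bigmax_leqP => i _; exact: ltn_ord. Qed.

Lemma cell_max_lt n (S1 S2 : {set 'I_n}) : S1 != set0 ->
  {in S1 & S2, forall a b, val b < val a} -> cell_max S2 < cell_max S1.
Proof.
case/set0Pn => a a_S1 lt_S2_S1.
have max_le_a : cell_max S2 <= val a by apply/bigmax_leqP => b b_S2; exact: lt_S2_S1.
exact: leq_ltn_trans max_le_a (leq_bigmax_cond _ a_S1).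
Qed.

Lemma cellE n m (Q : filling n m) r c (lt_r_n : r < n) (lt_c_m : c < m) :
  cell Q r c = Q (Ordinal lt_r_n, Ordinal lt_c_m).
Proof.
rewrite /cell; case: insubP => [r' _ r'E|]; last by rewrite lt_r_n.
case: insubP => [c' _ c'E|]; last by rewrite lt_c_m.
by congr (Q (_, _)); apply: val_inj.
Qed.

Lemma Lof_head_le n (T : tableau) (Q : filling n (size T)) :
  all (fun x => x <= n) (head [::] (Lof Q)).
Proof.
have : all (all (fun x => x <= n)) (Lof Q).
  by apply/allP => _ /mapP [c _ ->]; apply/allP => _ /mapP [r _ ->]; apply: cell_max_le.
by case: (Lof Q) => //= col L /andP[].
Qed.

Lemma Lof_head_uniq n (T : tableau) (Q : filling n (size T)) :
  is_RSVT Q -> nrows T <= n -> uniq (head [::] (Lof Q)).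
Proof.
case/andP=> /andP[/forallP shapeQ _] /forallP colQ T_rows.
rewrite /Lof; case: (posnP (size T)) => [T0|T_pos].
  by rewrite (_ : iota 0 (size T) = [::]) // T0.
rewrite (_ : iota 0 (size T) = 0 :: iota 1 (size T).-1) /=; last by rewrite -(prednK T_pos).
have nonempty r (lt_r_T : r < nrows T) : cell Q r 0 != set0.
  rewrite (cellE Q (leq_trans lt_r_T T_rows) T_pos).
  by have /forallP/(_ (Ordinal T_pos))/eqP -> := shapeQ (Ordinal (leq_trans lt_r_T T_rows)).
apply: (@sorted_uniq _ gtn) => [a b c ab bc|x|]; first exact: ltn_trans bc ab.
  by rewrite /= ltnn.
apply/(sortedP 0) => r; rewrite size_map size_iota => lt_r1_T.
have lt_r_T : r < nrows T by exact: ltnW.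
rewrite !(nth_map 0) ?size_iota // !nth_iota // !add0n.
apply: cell_max_lt; first exact: nonempty.
have lt_r_n : r < n by exact: leq_trans lt_r_T T_rows.
have lt_r1_n : r.+1 < n by exact: leq_trans lt_r1_T T_rows.
rewrite (cellE Q lt_r_n T_pos) (cellE Q lt_r1_n T_pos) => a b a_Q b_Q.
have := forallP (forallP (colQ (Ordinal lt_r_n)) (Ordinal lt_r1_n)) (Ordinal T_pos).
by rewrite /= eqxx /= => /forall_inP /(_ a a_Q) /forall_inP /(_ b b_Q).
Qed.

Lemma Kminus_Lof_cols n (T : tableau) (Q : filling n (size T)) :
  is_RSVT Q -> nrows T <= n ->
  all (fun col => sorted ltn col && all (fun x => x <= n) col) (Kminus (Lof Q)).
Proof.
move=> RSVT_Q T_rows; have /allP head_le := Lof_head_le Q.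
have /allP K_cols := Kminus_cols (Lof_head_uniq RSVT_Q T_rows).
apply/allP => col /K_cols /andP[-> /allP col_head].
by apply/allP => x /col_head /head_le.
Qed.

Lemma nth_size_shape (T : tableau) c : size (nth [::] T c) = nth 0 (map size T) c.
Proof. by elim: T c => [|a T IH] [|c] //=; rewrite nth_nil. Qed.

Section SumOverShape.

(* Decoupling the width m of the box from size T lets one compare the sums for
   two tableaux of equal shape: filling n (size T1) and filling n (size T2) are
   only propositionally equal. *)

Variables (R : comRingType) (n : nat) (beta : R).

Definition is_RSVT_in m (T : tableau) (Q : filling n m) : bool :=
  [forall r : 'I_n, forall c : 'I_m, (Q (r, c) != set0) == in_shape T r c]
  && [forall r : 'I_n, forall c : 'I_m, forall c' : 'I_m,
       (val c' == (val c).+1) ==>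
       [forall a in Q (r, c), forall b in Q (r, c'), (val b <= val a)]]
  && [forall r : 'I_n, forall r' : 'I_n, forall c : 'I_m,
       (val r' == (val r).+1) ==>
       [forall a in Q (r, c), forall b in Q (r', c), (val b < val a)]].

Definition Lof_in m (T : tableau) (Q : filling n m) : tableau :=
  [seq [seq cell_max (cell Q r c) | r <- iota 0 (size (nth [::] T c))]
     | c <- iota 0 (size T)].

Definition rsvt_sum_in m (T : tableau) (d : nat) : {mpoly R[n]} :=
  \sum_(Q : filling n m | is_RSVT_in T Q && tab_le (Kminus (Lof_in T Q)) T)
     (beta ^+ (totwt Q - d)) *: xmon R Q.

Lemma rsvt_sumE T d : rsvt_sum n beta T d = rsvt_sum_in (size T) T d.
Proof. by []. Qed.

Variables (T1 T2 : tableau).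
Hypothesis same_shape : map size T1 = map size T2.

Let size_nth_shape c : size (nth [::] T1 c) = size (nth [::] T2 c).
Proof. by rewrite !nth_size_shape same_shape. Qed.

Lemma rsvt_sum_shape d :
  (forall Q : filling n (size T1), is_RSVT Q ->
     tab_le (Kminus (Lof Q)) T1 = tab_le (Kminus (Lof Q)) T2) ->
  rsvt_sum n beta T1 d = rsvt_sum n beta T2 d.
Proof.
move=> same_le.
have size_T12 : size T1 = size T2 by rewrite -(size_map size) same_shape size_map.
rewrite !rsvt_sumE -size_T12; apply: eq_bigl => Q.
have -> : Lof_in T2 Q = Lof_in T1 Q.
  by rewrite /Lof_in -size_T12; apply: eq_map => c; rewrite size_nth_shape.
have -> : is_RSVT_in T2 Q = is_RSVT_in T1 Q.
  rewrite /is_RSVT_in; congr (_ && _ && _); apply: eq_forallb => r; apply: eq_forallb => c.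
  by rewrite /in_shape size_nth_shape.
by case RSVT_Q: (is_RSVT_in T1 Q); rewrite //= same_le.
Qed.

End SumOverShape.

Unset Implicit Arguments.

Theorem corollary3p3 (R : comRingType) (n : nat) (beta : R) (T : tableau) :
  is_key T -> (nrows T <= n)%N ->
  rsvt_sum n beta T (ncells T) = lascoux n beta (wt_tab n (cap n T)).
Proof.
move=> T_key T_rows.
have T_fit := key_cols_fit T_key T_rows.
have cap_key := cap_key_in T_key T_rows.
rewrite /lascoux key_wt_tab // sumn_wt_tab // {2}/ncells shape_cap //.
apply: rsvt_sum_shape; first by rewrite shape_cap.
by move=> Q RSVT_Q; rewrite tab_le_cap // Kminus_Lof_cols.
Qed.
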